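(* Let $a,b,c,d$ be admissible TDL parameters. (i) Let $V$ be a Gamma random variable with Laplace transform $E[e^{-tV}]=(1+bdt)^{-1/d}$, and let $X$ be a random variable whose conditional law given $V$ is $\mathrm{TDS}(a,V,c)$. Then $X\sim\mathrm{TDL}(a,b,c,d)$. (ii) If moreover $c\in(0,1]$, let $W$ be Gamma with Laplace transform $(1+bdc^a t)^{-1/d}$, let $Y$ have conditional law $\mathrm{TPS}(a,W,1/c-1)$ given $W$, and let $X'$ have conditional law Poisson with mean $Y$ given $(W,Y)$. Then $X'\sim\mathrm{TDL}(a,b,c,d)$.
   Context: $\operatorname{sgn}$ is the sign function with $\operatorname{sgn}(0)=0$. $\mathrm{TDS}(a,b,c)$: law on $\mathbb{N}$ with pgf $\exp(\operatorname{sgn}(a)b((1-c)^a-(1-cs)^a))$, $s\in[0,1]$ (the formula defines the law for any $b>0$ and admissible $a,c$). $\mathrm{TDL}(a,b,c,d)$: law on $\mathbb{N}$ with pgf $\big(1+\operatorname{sgn}(a)\,b\,d\,((1-cs)^a-(1-c)^a)\big)^{-1/d}$, $s\in[0,1]$; admissible parameters: $d>0$, $b>0$, and either $a\le0$, $c\in[0,1)$, or $a\in(0,1]$, $c\in[0,1]$. $\mathrm{TPS}(\gamma,\lambda,\theta)$ (Tweedie / tempered positive stable law): the law on $[0,\infty)$ with Laplace transform $\exp\big(\operatorname{sgn}(\gamma)\lambda(\theta^\gamma-(\theta+t)^\gamma)\big)$, $\mathrm{Re}(t)>0$, for $\lambda>0$ and either $\gamma\le1$, $\theta>0$, or $\gamma\in(0,1]$,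 $\theta=0$. Poisson with mean $0$ is the point mass at $0$. *)

From Stdlib Require Import Reals Lra Arith Factorial.
Open Scope R_scope.

Definition sgn (x : R) : R :=
  if Rlt_dec 0 x then 1 else if Rlt_dec x 0 then -1 else 0.

(* real power x^y for x >= 0, with the convention 0^y = 0
   (only used with y > 0 when x = 0 for admissible parameters) *)
Definition rpow (x y : R) : R := if Rlt_dec 0 x then Rpower x y else 0.

Definition has_pgf (p : nat -> R) (G : R -> R) : Prop :=
  forall s, 0 <= s <= 1 -> infinite_sum (fun k => p k * s ^ k) (G s).

Definition TDS_pgf (a b c : R) (s : R) : R :=
  exp (sgn a * b * (rpow (1 - c) a - rpow (1 - c * s) a)).

Definition TDL_pgf (a b c d : R) (s : R) : R :=
  rpow (1 + sgn a * b * d * (rpow (1 - c * s) a - rpow (1 - c) a)) (- (1 / d)).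

Definition is_TDS (a b c : R) (p : nat -> R) : Prop :=
  (forall k, 0 <= p k) /\ has_pgf p (TDS_pgf a b c).

Definition is_TDL (a b c d : R) (p : nat -> R) : Prop :=
  (forall k, 0 <= p k) /\ has_pgf p (TDL_pgf a b c d).

Definition TDL_admissible (a b c d : R) : Prop :=
  0 < d /\ 0 < b /\ ((a <= 0 /\ 0 <= c < 1) \/ ((0 < a <= 1) /\ 0 <= c <= 1)).

Definition Rint_0inf (f : R -> R) (l : R) : Prop :=
  (forall x y, 0 < x -> x <= y -> inhabited (Riemann_integrable f x y)) /\
  (forall eps, 0 < eps -> exists del M, 0 < del < M /\
     forall x y (pr : Riemann_integrable f x y),
       0 < x -> x < del -> M < y -> Rabs (RiemannInt pr - l) < eps).

Definition is_gamma_density (beta d : R) (g : R -> R) : Prop :=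
  (forall v, 0 <= g v) /\
  (forall t, 0 <= t -> Rint_0inf (fun v => g v * exp (- (t * v)))
                                 (rpow (1 + beta * t) (- (1 / d)))).

(* ---------- laws on [0,+oo), as (Daniell) expectation functionals ----------
   A Borel probability law mu on [0,+oo) is encoded by E f = \int f dmu, acting
   on test functions that are continuous and bounded on [0,+oo). *)
Definition test_fun (f : R -> R) : Prop :=
  (forall x, continuity_pt f x) /\ exists M, forall x, 0 <= x -> Rabs (f x) <= M.

Definition is_law_pos (E : (R -> R) -> R) : Prop :=
  (forall f g, (forall x, 0 <= x -> f x = g x) -> E f = E g) /\
  (forall f g, test_fun f -> test_fun g -> E (fun x => f x + g x) = E f + E g) /\
  (forall r f, test_fun f -> E (fun x => r * f x) = r * E f) /\
  (forall f, test_fun f -> (forall x, 0 <= x -> 0 <= f x) -> 0 <= E f) /\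
  E (fun _ => 1) = 1 /\
  (forall fn : nat -> R -> R, (forall n, test_fun (fn n)) ->
     (forall n x, 0 <= x -> fn (S n) x <= fn n x) ->
     (forall x, 0 <= x -> Un_cv (fun n => fn n x) 0) ->
     Un_cv (fun n => E (fn n)) 0).

Definition is_TPS (ga la th : R) (E : (R -> R) -> R) : Prop :=
  is_law_pos E /\
  forall t, 0 < t ->
    E (fun y => exp (- (t * y))) =
    exp (sgn ga * la * (rpow th ga - rpow (th + t) ga)).

Definition pois (k : nat) (y : R) : R := exp (- y) * y ^ k / INR (fact k).

(* Both parts are instances of one mixing principle. Let (r_v)_{v>0} be laws on N whose pgfs
   exp (v phi(s)) form a convolution semigroup (phi(1) = 0, phi <= 0 on [0,1]), and let g be a
   density with Laplace transform L. Then q_k = \int g(v) r_v(k) dv has pgf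
   \int g(v) exp (v phi(s)) dv = L(-phi(s)). In (i), r_v = TDS(a,v,c) and L(t) = (1 + b d t)^(-1/d).
   In (ii), r_w is the Poisson mixture of TPS(a,w,1/c-1), whose pgf is the TPS Laplace transform
   at 1 - s, and c^a (1/c - s)^a = (1 - c s)^a turns L(-phi(s)) into the TDL pgf.
   The analytic work is the interchange of sum and integral. Comparing coefficients in
   exp ((v+w) phi) = exp (v phi) exp (w phi) shows that r_v(k) is Lipschitz in v, so g r_.(k) is
   Riemann integrable, and that the partial masses sum_{k<=n} r_v(k) decrease in v, which bounds
   the pgf tails uniformly on compact subintervals of (0, +oo). *)

From Stdlib Require Import Reals Lra Lia Factorial.
From Stdlib Require Import Classical_Prop IndefiniteDescription FunctionalExtensionality.
From Coquelicot Require Import Coquelicot.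
Open Scope R_scope.

Lemma exp_le (x y : R) : x <= y -> exp x <= exp y.
Proof. intros [H|H]; [left; apply exp_increasing; auto | subst; lra]. Qed.

Lemma ex_RInt_uniform_limit (f : R -> R) a b : a <= b ->
  (forall eps, 0 < eps -> exists phi : R -> R, ex_RInt phi a b /\
      forall t, a <= t <= b -> Rabs (f t - phi t) <= eps) ->
  ex_RInt f a b.
Proof.
  intros Hab H. apply ex_RInt_Reals_1. intro eps.
  set (d := eps / (2 * (b - a + 1))).
  assert (Hd : 0 < d) by (unfold d; apply Rdiv_lt_0_compat; [apply cond_pos | lra]).
  destruct (constructive_indefinite_description _ (H d Hd)) as [phi [Hphi Hb]].
  assert (He2 : 0 < eps / 2) by (pose proof (cond_pos eps); lra).
  destruct (ex_RInt_Reals_0 _ _ _ Hphi (mkposreal _ He2)) as [phi1 [psi1 [H1 H2]]].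
  exists phi1, (mkStepFun (StepFun_P28 1 psi1 (mkStepFun (StepFun_P4 a b d)))).
  split.
  - intros t Ht. simpl. unfold fct_cte.
    specialize (H1 t Ht). rewrite Rmin_left, Rmax_right in Ht by lra.
    specialize (Hb t Ht).
    replace (f t - phi1 t) with ((f t - phi t) + (phi t - phi1 t)) by ring.
    eapply Rle_trans; [apply Rabs_triang | lra].
  - rewrite StepFun_P30. simpl. rewrite StepFun_P18.
    eapply Rle_lt_trans; [apply Rabs_triang |].
    rewrite (Rabs_right (1 * _)) by (apply Rle_ge; rewrite Rmult_1_l; apply Rmult_le_pos; lra).
    simpl in H2.
    assert (d * (b - a) = eps / 2 - d) by (unfold d; field; lra).
    lra.
Qed.

Lemma ex_RInt_glue (phi g : R -> R) (a m b c : R) : a <= m <= b ->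
  ex_RInt phi a m -> ex_RInt g m b ->
  ex_RInt (fun t => if Rle_dec t m then phi t else g t * c) a b.
Proof.
  intros Hm Hphi Hg. apply (ex_RInt_Chasles _ a m b).
  - apply (ex_RInt_ext phi); auto.
    intros x Hx. rewrite Rmin_left, Rmax_right in Hx by lra.
    destruct (Rle_dec x m); [reflexivity | lra].
  - apply (ex_RInt_ext (fun y => scal c (g y))); [| exact (ex_RInt_scal g m b c Hg)].
    intros x Hx. rewrite Rmin_left, Rmax_right in Hx by lra.
    destruct (Rle_dec x m); [lra |]. exact (Rmult_comm c (g x)).
Qed.

(* Glue in one subinterval at a time, freezing [h] at the left end of each subinterval. *)
Lemma ex_RInt_mult_frozen_approx (g h : R -> R) a b D e n : 0 <= D ->
  a + INR n * D <= b -> ex_RInt g a b ->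
  (forall m t, a <= m <= t -> t <= m + D -> t <= b -> Rabs (g t * h t - g t * h m) <= e) ->
  exists phi, ex_RInt phi a (a + INR n * D) /\
    forall t, a <= t <= a + INR n * D -> Rabs (g t * h t - phi t) <= e.
Proof.
  intros HD Hn Hg Hfrozen. induction n as [|n IH].
  - exists (fun t => g t * h t). rewrite Rmult_0_l, Rplus_0_r in *. split.
    + apply ex_RInt_point.
    + intros t _. specialize (Hfrozen a a). rewrite !Rminus_diag, Rabs_R0 in *.
      apply Hfrozen; lra.
  - rewrite S_INR in Hn |- *. set (m := a + INR n * D) in *.
    replace (a + (INR n + 1) * D) with (m + D) in * by (unfold m; ring).
    assert (Hm : a <= m).
    { unfold m. assert (0 <= INR n * D) by (apply Rmult_le_pos; [apply pos_INR | lra]). lra. }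
    destruct IH as [phi [Hphi Hb]]; [lra |].
    exists (fun t => if Rle_dec t m then phi t else g t * h m). split.
    + apply ex_RInt_glue; [lra | exact Hphi |].
      apply (ex_RInt_Chasles_2 g a m (m + D)); [lra |].
      apply (ex_RInt_Chasles_1 g a (m + D) b); [lra | exact Hg].
    + intros t Ht. destruct (Rle_dec t m); [apply Hb; lra |]. apply Hfrozen; lra.
Qed.

Lemma ex_RInt_mult_lipschitz (g h : R -> R) a b K : a <= b -> ex_RInt g a b ->
  (forall t t', a <= t <= b -> a <= t' <= b -> Rabs (h t - h t') <= K * Rabs (t - t')) ->
  ex_RInt (fun t => g t * h t) a b.
Proof.
  intros Hab Hg Hh.
  destruct (ex_RInt_ub g a b Hg) as [M HM].
  rewrite Rmin_left, Rmax_right in HM by lra.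
  apply ex_RInt_uniform_limit; auto. intros e He.
  destruct (INR_archimed e (Rabs M * Rabs K * (b - a)) He) as [N0 HN0].
  set (N := S N0). set (D := (b - a) / INR N).
  assert (HN : 0 < INR N) by (apply lt_0_INR; unfold N; lia).
  assert (HD : 0 <= D) by (unfold D; apply Rdiv_le_0_compat; lra).
  assert (HbN : a + INR N * D = b) by (unfold D; field; lra).
  assert (Herr : Rabs M * Rabs K * D <= e).
  { unfold D. apply Rmult_le_reg_r with (INR N); auto.
    replace (Rabs M * Rabs K * ((b - a) / INR N) * INR N) with (Rabs M * Rabs K * (b - a))
      by (field; lra).
    assert (INR N0 <= INR N) by (apply le_INR; unfold N; lia).
    assert (INR N0 * e <= INR N * e) by (apply Rmult_le_compat_r; lra). lra. }
  destruct (ex_RInt_mult_frozen_approx g h a b D e N HD ltac:(lra) Hg) as [phi [H1 H2]].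
  - intros m t Hmt HtD Htb.
    replace (g t * h t - g t * h m) with (g t * (h t - h m)) by ring.
    rewrite Rabs_mult. eapply Rle_trans; [| exact Herr].
    assert (Rabs (g t) <= Rabs M)
      by (eapply Rle_trans; [apply (HM t); lra | apply Rle_abs]).
    assert (Rabs (h t - h m) <= Rabs K * D).
    { eapply Rle_trans; [apply Hh; lra |]. rewrite (Rabs_right (t - m)) by lra.
      apply Rle_trans with (Rabs K * (t - m)).
      - apply Rmult_le_compat_r; [lra | apply Rle_abs].
      - apply Rmult_le_compat_l; [apply Rabs_pos | lra]. }
    rewrite Rmult_assoc. apply Rmult_le_compat; auto; apply Rabs_pos.
  - rewrite HbN in H1, H2. exists phi; auto.
Qed.

Lemma RiemannInt_ge0 f a b (pr : Riemann_integrable f a b) : a <= b ->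
  (forall t, a < t < b -> 0 <= f t) -> 0 <= RiemannInt pr.
Proof.
  intros Hab H.
  pose proof (RiemannInt_P19 (RiemannInt_P14 a b 0) pr Hab) as K.
  rewrite RiemannInt_P15, Rmult_0_l in K. apply K.
  intros; unfold fct_cte; auto.
Qed.

Lemma RiemannInt_le_subinterval f x x0 y0 y (pr : Riemann_integrable f x y)
  (pr0 : Riemann_integrable f x0 y0) :
  x <= x0 -> x0 <= y0 -> y0 <= y -> (forall t, x < t < y -> 0 <= f t) ->
  RiemannInt pr0 <= RiemannInt pr.
Proof.
  intros H1 H2 H3 Hp.
  assert (Hxy0 : x <= x0 <= y) by lra.
  pose proof (RiemannInt_P22 pr Hxy0) as p1.
  pose proof (RiemannInt_P23 pr Hxy0) as p2.
  pose proof (RiemannInt_P23 p2 (conj H2 H3)) as p3.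
  rewrite <- (RiemannInt_P26 p1 p2 pr), <- (RiemannInt_P26 pr0 p3 p2).
  assert (0 <= RiemannInt p1) by (apply RiemannInt_ge0; auto; intros; apply Hp; lra).
  assert (0 <= RiemannInt p3) by (apply RiemannInt_ge0; auto; intros; apply Hp; lra).
  lra.
Qed.

Lemma Rint_0inf_tail f l eps x1 y1 : Rint_0inf f l -> 0 < eps -> 0 < x1 ->
  exists x0 y0, 0 < x0 <= x1 /\ Rmax x1 y1 <= y0 /\
    forall x y (pr : Riemann_integrable f x y),
      0 < x <= x0 -> y0 <= y -> Rabs (RiemannInt pr - l) < eps.
Proof.
  intros [_ Hf] Heps Hx1. destruct (Hf eps Heps) as [del [M [HdM H]]].
  exists (Rmin x1 (del / 2)), (Rmax (Rmax x1 y1) (M + 1)).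
  pose proof (Rmin_l x1 (del / 2)). pose proof (Rmin_r x1 (del / 2)).
  pose proof (Rmax_l (Rmax x1 y1) (M + 1)). pose proof (Rmax_r (Rmax x1 y1) (M + 1)).
  split; [split; [apply Rmin_pos; lra | lra] | split; [lra |]].
  intros x y pr Hx Hy. apply H; lra.
Qed.

Lemma Rint_0inf_ext f h l : (forall v, 0 < v -> f v = h v) -> Rint_0inf f l -> Rint_0inf h l.
Proof.
  intros E [H1 H2]. split.
  - intros x y Hx Hxy. destruct (H1 x y Hx Hxy) as [pr]. constructor.
    apply Riemann_integrable_ext with f; auto.
    intros t Ht. rewrite Rmin_left in Ht by lra. apply E; lra.
  - intros eps Heps. destruct (H2 eps Heps) as [del [M [HdM H]]].
    exists del, M. split; auto. intros x y pr Hx Hxd HMy.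
    destruct (H1 x y Hx ltac:(lra)) as [prf].
    rewrite <- (RiemannInt_P18 prf pr); [apply H; auto | lra |].
    intros t Ht; apply E; lra.
Qed.

Lemma Rint_0inf_plus_scal f h l1 l2 c : Rint_0inf f l1 -> Rint_0inf h l2 ->
  Rint_0inf (fun v => f v + c * h v) (l1 + c * l2).
Proof.
  intros Hf Hh. pose proof Hf as [F1 _]. pose proof Hh as [G1 _]. split.
  - intros x y Hx Hxy. destruct (F1 x y Hx Hxy) as [p1]. destruct (G1 x y Hx Hxy) as [p2].
    constructor. apply RiemannInt_P10; auto.
  - intros eps Heps.
    assert (Hc : 0 < Rabs c + 1) by (pose proof (Rabs_pos c); lra).
    destruct (Rint_0inf_tail f l1 (eps / 2) 1 1 Hf) as [x1 [y1 [Hx1 [Hy1 K1]]]]; [lra | lra |].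
    destruct (Rint_0inf_tail h l2 (eps / 2 / (Rabs c + 1)) x1 y1 Hh)
      as [x2 [y2 [Hx2 [Hy2 K2]]]]; [apply Rdiv_lt_0_compat; lra | lra |].
    pose proof (Rmax_l x1 y1). pose proof (Rmax_r x1 y1).
    exists x2, (y2 + 1). split; [lra |].
    intros x y pr Hx Hxd HMy.
    destruct (F1 x y Hx ltac:(lra)) as [p1]. destruct (G1 x y Hx ltac:(lra)) as [p2].
    rewrite (RiemannInt_P13 p1 p2 pr).
    specialize (K1 x y p1 ltac:(lra) ltac:(lra)). specialize (K2 x y p2 ltac:(lra) ltac:(lra)).
    replace (RiemannInt p1 + c * RiemannInt p2 - (l1 + c * l2)) with
      ((RiemannInt p1 - l1) + c * (RiemannInt p2 - l2)) by ring.
    eapply Rle_lt_trans; [apply Rabs_triang |]. rewrite Rabs_mult.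
    assert (Rabs c * Rabs (RiemannInt p2 - l2) <= eps / 2).
    { apply Rle_trans with ((Rabs c + 1) * (eps / 2 / (Rabs c + 1))); [| right; field; lra].
      apply Rmult_le_compat; try apply Rabs_pos; lra. }
    lra.
Qed.

Lemma Rint_0inf_le f h l1 l2 : Rint_0inf f l1 -> Rint_0inf h l2 ->
  (forall v, 0 < v -> f v <= h v) -> l1 <= l2.
Proof.
  intros Hf Hh Hle. apply Rnot_lt_le. intro Hlt.
  destruct (Rint_0inf_tail f l1 ((l1 - l2) / 2) 1 1 Hf) as [x1 [y1 [Hx1 [Hy1 K1]]]]; [lra | lra |].
  destruct (Rint_0inf_tail h l2 ((l1 - l2) / 2) x1 y1 Hh) as [x [y [Hx [Hy K2]]]]; [lra | lra |].
  pose proof (Rmax_l x1 y1). pose proof (Rmax_l x y1). pose proof (Rmax_r x1 y1).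
  destruct (proj1 Hf x y ltac:(lra) ltac:(lra)) as [p1].
  destruct (proj1 Hh x y ltac:(lra) ltac:(lra)) as [p2].
  specialize (K1 x y p1 ltac:(lra) ltac:(lra)). specialize (K2 x y p2 ltac:(lra) ltac:(lra)).
  assert (RiemannInt p1 <= RiemannInt p2)
    by (apply RiemannInt_P19; [lra | intros t Ht; apply Hle; lra]).
  apply Rabs_def2 in K1. apply Rabs_def2 in K2. lra.
Qed.

Lemma Rint_0inf_0 : Rint_0inf (fun _ => 0) 0.
Proof.
  split.
  - intros. constructor. apply RiemannInt_P14.
  - intros eps He. exists 1, 2. split; [lra |]. intros x y pr _ _ _.
    rewrite RiemannInt_const, Rmult_0_l, Rminus_0_r, Rabs_R0; auto.
Qed.

Lemma Rint_0inf_ge0 f l : (forall v, 0 < v -> 0 <= f v) -> Rint_0inf f l -> 0 <= l.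
Proof. intros H K. exact (Rint_0inf_le _ _ _ _ Rint_0inf_0 K H). Qed.

Lemma RiemannInt_le_Rint_0inf f l x y (pr : Riemann_integrable f x y) :
  (forall v, 0 < v -> 0 <= f v) -> Rint_0inf f l -> 0 < x -> x <= y -> RiemannInt pr <= l.
Proof.
  intros Hp Hf Hx Hxy. apply Rnot_lt_le. intro Hlt.
  destruct (Rint_0inf_tail f l (RiemannInt pr - l) x y Hf) as [x0 [y0 [Hx0 [Hy0 K]]]];
    [lra | lra |].
  pose proof (Rmax_r x y).
  destruct (proj1 Hf x0 y0 ltac:(lra) ltac:(lra)) as [p0].
  specialize (K x0 y0 p0 ltac:(lra) ltac:(lra)).
  assert (RiemannInt pr <= RiemannInt p0)
    by (apply RiemannInt_le_subinterval; try lra; intros; apply Hp; lra).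
  apply Rabs_def2 in K. lra.
Qed.

(* The improper integral is the supremum of the integrals over compact subintervals. *)
Lemma Rint_0inf_dominated f G LG :
  (forall v, 0 < v -> 0 <= f v <= G v) ->
  (forall x y, 0 < x -> x <= y -> inhabited (Riemann_integrable f x y)) ->
  Rint_0inf G LG -> exists l, Rint_0inf f l.
Proof.
  intros Hle Hi HG.
  set (E := fun z => exists x y (pr : Riemann_integrable f x y), 0 < x <= y /\ z = RiemannInt pr).
  assert (Hb : forall z, E z -> z <= LG).
  { intros z [x [y [pr [Hxy ->]]]].
    destruct (proj1 HG x y ltac:(lra) ltac:(lra)) as [pG].
    apply Rle_trans with (RiemannInt pG).
    - apply RiemannInt_P19; [lra | intros; apply Hle; lra].
    - apply RiemannInt_le_Rint_0inf; try lra; auto.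
      intros v Hv; pose proof (Hle v Hv); lra. }
  assert (Hne : exists z, E z).
  { destruct (Hi 1 1 Rlt_0_1 (Rle_refl 1)) as [pr]. exists (RiemannInt pr), 1, 1, pr. split; auto; lra. }
  destruct (completeness E (ex_intro _ LG Hb) Hne) as [l [Hub Hlub]].
  exists l. split; auto.
  intros eps He.
  assert (exists z, E z /\ l - eps < z) as [z [[x0 [y0 [pr0 [Hxy0 ->]]]] Hz]].
  { apply NNPP. intro Hn.
    assert (l <= l - eps); [| lra].
    apply Hlub. intros z Ez. apply Rnot_lt_le. intro; apply Hn; exists z; auto. }
  exists x0, (y0 + 1). split; [lra |].
  intros x y pr Hx Hxd HMy.
  assert (RiemannInt pr <= l) by (apply Hub; exists x, y, pr; split; auto; lra).
  assert (RiemannInt pr0 <= RiemannInt pr)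
    by (apply RiemannInt_le_subinterval; try lra; intros; apply Hle; lra).
  apply Rabs_def1; lra.
Qed.

Lemma Un_cv_const (c : R) : Un_cv (fun _ => c) c.
Proof. intros e He. exists 0%nat. intros. unfold Rdist. rewrite Rminus_diag, Rabs_R0; auto. Qed.

Lemma Un_cv_dist_le (U : nat -> R) l x B : Un_cv U l -> (forall m, Rabs (U m - x) <= B) ->
  Rabs (l - x) <= B.
Proof.
  intros Hc Hb. apply (@Rle_cv_lim (fun m => Rabs (U m - x)) (fun _ => B)); auto.
  - apply cv_cvabs, (CV_minus _ _ _ _ Hc (Un_cv_const x)).
  - apply Un_cv_const.
Qed.

Section PowerSeriesUniqueness.

Variables (c : nat -> R) (K : R).
Hypothesis c_bounded : forall k, Rabs (c k) <= K.

(* Tail of a series with coefficients bounded by [K]: at most [K s / (1 - s) <= 2 K s]. *)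
Lemma power_series_sum_sub_coef0 s m : 0 < s <= /2 ->
  Rabs (sum_f_R0 (fun k => c k * s ^ k) m - c 0%nat) <= 2 * K * s.
Proof.
  intros Hs.
  assert (Hgeom : Rabs (sum_f_R0 (fun k => c k * s ^ k) m - c 0%nat)
                  <= K * s * (1 - s ^ m) / (1 - s)).
  { induction m as [|m IH].
    - simpl. replace (c 0%nat * 1 - c 0%nat) with 0 by ring. rewrite Rabs_R0.
      replace (K * s * (1 - 1) / (1 - s)) with 0 by (field; lra). lra.
    - rewrite tech5.
      replace (sum_f_R0 (fun k => c k * s ^ k) m + c (S m) * s ^ S m - c 0%nat) with
        ((sum_f_R0 (fun k => c k * s ^ k) m - c 0%nat) + c (S m) * s ^ S m) by ring.
      eapply Rle_trans; [apply Rabs_triang |].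
      assert (Rabs (c (S m) * s ^ S m) <= K * s ^ S m).
      { rewrite Rabs_mult, (Rabs_right (s ^ S m)) by (apply Rle_ge, pow_le; lra).
        apply Rmult_le_compat_r; [apply pow_le; lra | apply c_bounded]. }
      replace (K * s * (1 - s ^ S m) / (1 - s)) with (K * s * (1 - s ^ m) / (1 - s) + K * s ^ S m)
        by (simpl; field; lra).
      lra. }
  eapply Rle_trans; [apply Hgeom |].
  assert (HK : 0 <= K) by (eapply Rle_trans; [apply Rabs_pos | apply (c_bounded 0%nat)]).
  assert (0 <= s ^ m) by (apply pow_le; lra).
  apply Rmult_le_reg_r with (1 - s); [lra |].
  replace (K * s * (1 - s ^ m) / (1 - s) * (1 - s)) with (K * s * (1 - s ^ m)) by (field; lra).
  assert (0 <= K * s) by (apply Rmult_le_pos; lra).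
  assert (K * s * (1 - s ^ m) <= K * s) by nra.
  assert (K * s <= 2 * K * s * (1 - s)) by nra. lra.
Qed.

Lemma power_series_coef0_eq0 :
  (forall s, 0 < s <= /2 -> infinite_sum (fun k => c k * s ^ k) 0) -> c 0%nat = 0.
Proof.
  intros Hs.
  assert (Hbd : forall s, 0 < s <= /2 -> Rabs (c 0%nat) <= 2 * K * s).
  { intros s Hs'. rewrite <- Rabs_Ropp, <- Rminus_0_l.
    apply (Un_cv_dist_le _ _ _ _ (Hs s Hs')). intro m. now apply power_series_sum_sub_coef0. }
  destruct (Req_dec (c 0%nat) 0) as [E|E]; auto. exfalso.
  pose proof (Rabs_pos_lt _ E) as Hc0.
  assert (HK : 0 < K) by (pose proof (c_bounded 0%nat); lra).
  set (s := Rmin (/2) (Rabs (c 0%nat) / (4 * K))).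
  assert (Hs0 : 0 < s) by (apply Rmin_pos; [lra | apply Rdiv_lt_0_compat; lra]).
  specialize (Hbd s (conj Hs0 (Rmin_l _ _))).
  assert (2 * K * s <= Rabs (c 0%nat) / 2).
  { apply Rle_trans with (2 * K * (Rabs (c 0%nat) / (4 * K))); [| right; field; lra].
    apply Rmult_le_compat_l; [lra | apply Rmin_r]. }
  lra.
Qed.

End PowerSeriesUniqueness.

Lemma power_series_shift (c : nat -> R) s : c 0%nat = 0 -> 0 < s ->
  infinite_sum (fun k => c k * s ^ k) 0 -> infinite_sum (fun k => c (S k) * s ^ k) 0.
Proof.
  intros H0 Hs Hc.
  assert (Hid : forall m, sum_f_R0 (fun k => c (S k) * s ^ k) m * s
                          = sum_f_R0 (fun k => c k * s ^ k) (S m)).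
  { induction m.
    - simpl. rewrite H0. ring.
    - rewrite tech5, Rmult_plus_distr_r, IHm, (tech5 _ (S m)). simpl. ring. }
  intros e He. destruct (Hc (e * s)) as [N HN]; [apply Rmult_lt_0_compat; lra |].
  exists N. intros n Hn. specialize (HN (S n) ltac:(lia)). unfold Rdist in *.
  rewrite <- Hid, Rminus_0_r, Rabs_mult, (Rabs_right s) in HN by lra.
  rewrite Rminus_0_r. apply Rmult_lt_reg_r with s; lra.
Qed.

Lemma power_series_eq0 (c : nat -> R) K :
  (forall k, Rabs (c k) <= K) ->
  (forall s, 0 < s <= /2 -> infinite_sum (fun k => c k * s ^ k) 0) -> forall k, c k = 0.
Proof.
  intros Hb Hs k. revert c Hb Hs. induction k as [|k IH]; intros c Hb Hs.
  - exact (power_series_coef0_eq0 c K Hb Hs).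
  - apply (IH (fun k => c (S k))); auto. intros s Hs'.
    apply power_series_shift; [exact (power_series_coef0_eq0 c K Hb Hs) | lra | auto].
Qed.

Lemma power_series_unique (a b : nat -> R) M A :
  (forall k, Rabs (a k) <= M) -> (forall k, Rabs (b k) <= M) ->
  (forall s, 0 < s <= /2 -> infinite_sum (fun k => a k * s ^ k) (A s)) ->
  (forall s, 0 < s <= /2 -> infinite_sum (fun k => b k * s ^ k) (A s)) ->
  forall k, a k = b k.
Proof.
  intros Ha Hb HA HB k. apply Rminus_diag_uniq.
  apply (power_series_eq0 (fun k => a k - b k) (2 * M)).
  - intro j. unfold Rminus. eapply Rle_trans; [apply Rabs_triang |]. rewrite Rabs_Ropp.
    pose proof (Ha j); pose proof (Hb j); lra.
  - intros s Hs. pose proof (CV_minus _ _ _ _ (HA s Hs) (HB s Hs)) as K.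
    rewrite Rminus_diag in K. intros e He. destruct (K e He) as [N HN]. exists N.
    intros n Hn. specialize (HN n Hn). rewrite <- minus_sum in HN.
    erewrite sum_eq; [apply HN |]. intros; simpl; ring.
Qed.

Lemma sum_f_R0_ge_term (f : nat -> R) k : (forall j, 0 <= f j) -> f k <= sum_f_R0 f k.
Proof.
  intros H. destruct k; [simpl; lra |]. rewrite tech5.
  pose proof (cond_pos_sum f k H). lra.
Qed.

Lemma sum_cauchy_product_le (n : nat) : forall (a b : nat -> R) B,
  (forall k, 0 <= a k) -> (forall k, 0 <= b k) -> (forall m, sum_f_R0 b m <= B) ->
  sum_f_R0 (fun k => sum_f_R0 (fun j => a j * b (k - j)%nat) k) n <= sum_f_R0 a n * B.
Proof.
  induction n as [|n IH]; intros a b B Ha Hb HB.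
  - simpl. apply Rmult_le_compat_l; auto. apply (HB 0%nat).
  - assert (Hpeel : forall k, sum_f_R0 (fun j => a j * b (S k - j)%nat) (S k) =
        a 0%nat * b (S k) + sum_f_R0 (fun j => a (S j) * b (k - j)%nat) k).
    { intro k. rewrite decomp_sum by lia. simpl pred. now replace (S k - 0)%nat with (S k) by lia. }
    rewrite (decomp_sum _ (S n)) by lia. simpl pred.
    rewrite (sum_eq _ _ n (fun i _ => Hpeel i)), sum_plus.
    replace (sum_f_R0 (fun l => a 0%nat * b (S l)) n) with (a 0%nat * sum_f_R0 (fun l => b (S l)) n)
      by (rewrite scal_sum; apply sum_eq; intros; ring).
    specialize (IH (fun j => a (S j)) b B (fun k => Ha (S k)) Hb HB).
    rewrite (decomp_sum a (S n)) by lia. simpl pred. simpl sum_f_R0 at 1.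
    replace (0 - 0)%nat with 0%nat by lia.
    assert (b 0%nat + sum_f_R0 (fun i => b (S i)) n <= B).
    { pose proof (HB (S n)) as HBn. rewrite (decomp_sum b (S n)) in HBn by lia. exact HBn. }
    pose proof (Ha 0%nat). nra.
Qed.

Section PoissonTypeMixture.

Variables (r : R -> nat -> R) (phi : R -> R).
Hypothesis r_ge0 : forall v, 0 < v -> forall k, 0 <= r v k.
Hypothesis r_pgf : forall v, 0 < v -> forall s, 0 <= s <= 1 ->
  infinite_sum (fun k => r v k * s ^ k) (exp (v * phi s)).
Hypothesis phi1 : phi 1 = 0.

Lemma semigroup_mass v : 0 < v -> infinite_sum (r v) 1.
Proof.
  intros Hv. pose proof (r_pgf v Hv 1 ltac:(lra)) as K.
  rewrite phi1, Rmult_0_r, exp_0 in K. intros e He. destruct (K e He) as [N HN].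
  exists N. intros n Hn. rewrite (sum_eq (r v) (fun k => r v k * 1 ^ k)); [exact (HN n Hn) |].
  intros. rewrite pow1; ring.
Qed.

Lemma semigroup_partial_mass_le1 v n : 0 < v -> sum_f_R0 (r v) n <= 1.
Proof. intros Hv. exact (sum_incr _ n _ (semigroup_mass v Hv) (r_ge0 v Hv)). Qed.

Lemma semigroup_le1 v k : 0 < v -> r v k <= 1.
Proof.
  intros Hv. eapply Rle_trans; [apply sum_f_R0_ge_term, (r_ge0 v Hv) |].
  exact (semigroup_partial_mass_le1 v k Hv).
Qed.

Lemma semigroup_at0 v : 0 < v -> r v 0%nat = exp (v * phi 0).
Proof.
  intros Hv. apply (UL_sequence (fun n => sum_f_R0 (fun k => r v k * 0 ^ k) n));
    [| exact (r_pgf v Hv 0 ltac:(lra))].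
  replace (fun n => sum_f_R0 (fun k => r v k * 0 ^ k) n) with (fun _ : nat => r v 0%nat);
    [apply Un_cv_const |].
  extensionality n. induction n as [|n IH]; [simpl; ring |]. rewrite tech5, <- IH. simpl. ring.
Qed.

Lemma semigroup_conv v w k : 0 < v -> 0 < w ->
  r (v + w) k = sum_f_R0 (fun j => r v j * r w (k - j)%nat) k.
Proof.
  intros Hv Hw. assert (Hvw : 0 < v + w) by lra.
  apply (power_series_unique _ (fun k => sum_f_R0 (fun j => r v j * r w (k - j)%nat) k) 1
    (fun s => exp ((v + w) * phi s))).
  - intro j. rewrite Rabs_right by (apply Rle_ge, r_ge0; lra). now apply semigroup_le1.
  - intro j. rewrite Rabs_right by (apply Rle_ge, cond_pos_sum; intro i; apply Rmult_le_pos; auto).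
    apply Rle_trans with (sum_f_R0 (r v) j); [| exact (semigroup_partial_mass_le1 v j Hv)].
    apply sum_Rle. intros i _.
    pose proof (r_ge0 v Hv i). pose proof (semigroup_le1 w (j - i)%nat Hw).
    pose proof (r_ge0 w Hw (j - i)%nat). nra.
  - intros s Hs. apply r_pgf; [lra | lra].
  - intros s Hs. apply is_series_Reals.
    rewrite Rmult_plus_distr_r, exp_plus.
    replace (fun n => sum_f_R0 (fun j => r v j * r w (n - j)%nat) n * s ^ n) with
       (fun n => sum_f_R0 (fun k => r v k * s ^ k * (r w (n - k)%nat * s ^ (n - k))) n).
    + apply (is_series_mult_pos (fun k => r v k * s ^ k) (fun k => r w k * s ^ k));
        try (apply is_series_Reals, r_pgf; lra);
        intro n; apply Rmult_le_pos; (apply r_ge0 || apply pow_le); lra.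
    + extensionality n. rewrite Rmult_comm, scal_sum. apply sum_eq. intros i Hi.
      replace (s ^ n) with (s ^ i * s ^ (n - i)); [ring |].
      rewrite <- pow_add. f_equal. lia.
Qed.

Lemma semigroup_shift_le v w k : 0 < v -> 0 < w ->
  Rabs (r (v + w) k - r w k) <= 2 * (1 - exp (v * phi 0)).
Proof.
  intros Hv Hw. rewrite (semigroup_conv v w k Hv Hw), <- (semigroup_at0 v Hv).
  pose proof (semigroup_le1 w k Hw). pose proof (r_ge0 w Hw k).
  pose proof (r_ge0 v Hv 0%nat). pose proof (semigroup_le1 v 0 Hv).
  destruct k as [|k].
  - simpl. replace (r v 0%nat * r w 0%nat - r w 0%nat) with (- ((1 - r v 0%nat) * r w 0%nat)) by ring.
    rewrite Rabs_Ropp, Rabs_right by (apply Rle_ge, Rmult_le_pos; lra). nra.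
  - rewrite decomp_sum by lia. simpl pred. replace (S k - 0)%nat with (S k) by lia.
    set (rest := sum_f_R0 (fun i => r v (S i) * r w (S k - S i)%nat) k).
    assert (0 <= rest) by (apply cond_pos_sum; intro i; apply Rmult_le_pos; auto).
    assert (rest <= 1 - r v 0%nat).
    { apply Rle_trans with (sum_f_R0 (fun i => r v (S i)) k).
      - apply sum_Rle. intros i _. pose proof (semigroup_le1 w (S k - S i)%nat Hw).
        pose proof (r_ge0 v Hv (S i)). nra.
      - pose proof (semigroup_partial_mass_le1 v (S k) Hv) as K.
        rewrite decomp_sum in K by lia. simpl pred in K. lra. }
    apply Rabs_le. split; nra.
Qed.

Lemma semigroup_lipschitz k t t' : 0 < t -> 0 < t' ->
  Rabs (r t k - r t' k) <= 2 * Rabs (phi 0) * Rabs (t - t').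
Proof.
  assert (Key : forall u w, 0 < u -> 0 < w -> Rabs (r (u + w) k - r w k) <= 2 * Rabs (phi 0) * u).
  { intros u w Hu Hw. eapply Rle_trans; [exact (semigroup_shift_le u w k Hu Hw) |].
    pose proof (exp_ineq1_le (u * phi 0)).
    assert (- (u * phi 0) <= u * Rabs (phi 0)).
    { rewrite Ropp_mult_distr_r. apply Rmult_le_compat_l; [lra |].
      rewrite <- Rabs_Ropp. apply Rle_abs. }
    lra. }
  intros Ht Ht'. destruct (Rtotal_order t t') as [Hl|[He|Hg]].
  - rewrite Rabs_minus_sym, (Rabs_minus_sym t), (Rabs_right (t' - t)) by lra.
    replace t' with ((t' - t) + t) at 1 by ring. apply Key; lra.
  - subst. rewrite !Rminus_diag, Rabs_R0, Rmult_0_r. lra.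
  - rewrite (Rabs_right (t - t')) by lra. replace t with ((t - t') + t') at 1 by ring. apply Key; lra.
Qed.

Lemma semigroup_partial_mass_decr v w n : 0 < v -> 0 < w ->
  sum_f_R0 (r (v + w)) n <= sum_f_R0 (r v) n.
Proof.
  intros Hv Hw.
  rewrite (sum_eq _ (fun k => sum_f_R0 (fun j => r v j * r w (k - j)%nat) k))
    by (intros; now apply semigroup_conv).
  rewrite <- (Rmult_1_r (sum_f_R0 (r v) n)).
  apply sum_cauchy_product_le; auto. intro m. now apply semigroup_partial_mass_le1.
Qed.

Lemma semigroup_pgf_tail v s n : 0 < v -> 0 <= s <= 1 ->
  exp (v * phi s) - sum_f_R0 (fun k => r v k * s ^ k) n <= 1 - sum_f_R0 (r v) n.
Proof.
  intros Hv Hs.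
  set (dd := fun m => sum_f_R0 (fun k => r v k - r v k * s ^ k) m).
  assert (Hg : Un_growing dd).
  { intro m. unfold dd. rewrite tech5.
    assert (s ^ S m <= 1) by (rewrite <- (pow1 (S m)); apply pow_incr; lra).
    pose proof (r_ge0 v Hv (S m)). nra. }
  assert (Hc : Un_cv dd (1 - exp (v * phi s))).
  { intros e He. destruct (CV_minus _ _ _ _ (semigroup_mass v Hv) (r_pgf v Hv s Hs) e He) as [N HN].
    exists N. intros m Hm. unfold dd. rewrite minus_sum. apply HN; auto. }
  pose proof (growing_ineq _ _ Hg Hc n) as K. unfold dd in K. rewrite minus_sum in K. lra.
Qed.

Variables (g L : R -> R).
Hypothesis g_ge0 : forall v, 0 <= g v.
Hypothesis g_laplace : forall t, 0 <= t -> Rint_0inf (fun v => g v * exp (- (t * v))) (L t).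
Hypothesis phi_le0 : forall s, 0 <= s <= 1 -> phi s <= 0.

Lemma g_Rint_0inf : Rint_0inf g (L 0).
Proof.
  apply Rint_0inf_ext with (fun v => g v * exp (- (0 * v))); [| apply g_laplace; lra].
  intros. rewrite Rmult_0_l, Ropp_0, exp_0. ring.
Qed.

Lemma g_laplace_phi s : 0 <= s <= 1 ->
  Rint_0inf (fun v => g v * exp (v * phi s)) (L (- phi s)).
Proof.
  intros Hs. apply Rint_0inf_ext with (fun v => g v * exp (- (- phi s * v))).
  - intros v _. do 2 f_equal. ring.
  - apply g_laplace. pose proof (phi_le0 s Hs). lra.
Qed.

Lemma mixture_integrable k x y : 0 < x -> x <= y ->
  inhabited (Riemann_integrable (fun v => g v * r v k) x y).
Proof.
  intros Hx Hxy. constructor. apply ex_RInt_Reals_0.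
  apply (ex_RInt_mult_lipschitz _ _ _ _ (2 * Rabs (phi 0))); auto.
  - destruct (proj1 g_Rint_0inf x y Hx Hxy) as [pr]. now apply ex_RInt_Reals_1.
  - intros t t' Ht Ht'. apply semigroup_lipschitz; lra.
Qed.

Lemma mixture_coef_exists k : exists l, Rint_0inf (fun v => g v * r v k) l.
Proof.
  apply (Rint_0inf_dominated _ g (L 0)); [| apply mixture_integrable | apply g_Rint_0inf].
  intros v Hv. pose proof (semigroup_le1 v k Hv). pose proof (r_ge0 v Hv k). pose proof (g_ge0 v).
  split; nra.
Qed.

Definition mixture_coef k : R :=
  proj1_sig (constructive_indefinite_description _ (mixture_coef_exists k)).

Lemma mixture_coefP k : Rint_0inf (fun v => g v * r v k) (mixture_coef k).
Proof. exact (proj2_sig (constructive_indefinite_description _ (mixture_coef_exists k))). Qed.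

Lemma mixture_coef_ge0 k : 0 <= mixture_coef k.
Proof.
  apply (Rint_0inf_ge0 _ _ ) with (2 := mixture_coefP k).
  intros v Hv. apply Rmult_le_pos; auto.
Qed.

Lemma mixture_partial_pgf s n :
  Rint_0inf (fun v => g v * sum_f_R0 (fun k => r v k * s ^ k) n)
            (sum_f_R0 (fun k => mixture_coef k * s ^ k) n).
Proof.
  induction n as [|n IH].
  - apply (Rint_0inf_ext (fun v => 0 + s ^ 0 * (g v * r v 0%nat))).
    + intros v _. simpl. ring.
    + replace (sum_f_R0 (fun k => mixture_coef k * s ^ k) 0) with (0 + s ^ 0 * mixture_coef 0)
        by (simpl; ring).
      apply Rint_0inf_plus_scal; [exact Rint_0inf_0 | apply mixture_coefP].
  - apply (Rint_0inf_ext (fun v => g v * sum_f_R0 (fun k => r v k * s ^ k) n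
                                   + s ^ S n * (g v * r v (S n)))).
    + intros v _. rewrite tech5. ring.
    + rewrite tech5, (Rmult_comm (mixture_coef (S n))).
      apply Rint_0inf_plus_scal; [exact IH | apply mixture_coefP].
Qed.

Lemma mixture_partial_pgf_le s n : 0 <= s <= 1 ->
  sum_f_R0 (fun k => mixture_coef k * s ^ k) n <= L (- phi s).
Proof.
  intros Hs. apply (Rint_0inf_le _ _ _ _ (mixture_partial_pgf s n) (g_laplace_phi s Hs)).
  intros v Hv. apply Rmult_le_compat_l; auto.
  apply sum_incr; [now apply r_pgf |].
  intro k. apply Rmult_le_pos; [auto | apply pow_le; lra].
Qed.

(* On [x, y] the pgf tail at [v] is at most the mass tail at [y], since partial masses
   decrease in [v]; the latter tends to 0 uniformly on [x, y]. *)
Lemma mixture_pgf s : 0 <= s <= 1 ->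
  infinite_sum (fun k => mixture_coef k * s ^ k) (L (- phi s)).
Proof.
  intros Hs e He.
  pose proof (g_laplace_phi s Hs) as HT. set (T := L (- phi s)) in *.
  destruct (Rint_0inf_tail _ _ (e / 2) 1 1 HT) as [x [y [Hx [Hy KT]]]]; [lra | lra |].
  pose proof (Rmax_l 1 1).
  destruct (proj1 HT x y ltac:(lra) ltac:(lra)) as [prF].
  specialize (KT x y prF ltac:(lra) ltac:(lra)).
  destruct (proj1 g_Rint_0inf x y ltac:(lra) ltac:(lra)) as [prg].
  set (G := RiemannInt prg).
  assert (HG : 0 <= G) by (apply RiemannInt_ge0; auto; lra).
  destruct (semigroup_mass y ltac:(lra) (e / 2 / (G + 1))) as [N HN];
    [apply Rdiv_lt_0_compat; lra |].
  exists N. intros n Hn. specialize (HN n Hn). unfold Rdist in HN |- *.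
  set (tl := 1 - sum_f_R0 (r y) n).
  assert (Htl0 : 0 <= tl) by (pose proof (semigroup_partial_mass_le1 y n ltac:(lra)); unfold tl; lra).
  assert (Htl : tl * G <= e / 2).
  { rewrite Rabs_minus_sym in HN. fold tl in HN. rewrite Rabs_right in HN by lra.
    apply Rle_trans with (e / 2 / (G + 1) * (G + 1)); [nra | right; field; lra]. }
  destruct (proj1 (mixture_partial_pgf s n) x y ltac:(lra) ltac:(lra)) as [prS].
  assert (HS1 : RiemannInt prS <= sum_f_R0 (fun k => mixture_coef k * s ^ k) n).
  { apply (RiemannInt_le_Rint_0inf _ _ _ _ prS) with (2 := mixture_partial_pgf s n); try lra.
    intros v Hv. apply Rmult_le_pos; auto. apply cond_pos_sum.
    intro k. apply Rmult_le_pos; [auto | apply pow_le; lra]. }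
  assert (prC : Riemann_integrable (fun v => g v * exp (v * phi s) + (- tl) * g v) x y)
    by (apply RiemannInt_P10; auto).
  assert (HS2 : RiemannInt prC <= RiemannInt prS).
  { apply RiemannInt_P19; [lra |]. intros v Hv.
    pose proof (semigroup_pgf_tail v s n ltac:(lra) Hs).
    assert (sum_f_R0 (r y) n <= sum_f_R0 (r v) n).
    { replace y with (v + (y - v)) by ring. apply semigroup_partial_mass_decr; lra. }
    assert (E1 : exp (v * phi s) - sum_f_R0 (fun k => r v k * s ^ k) n <= tl) by (unfold tl; lra).
    pose proof (Rmult_le_compat_l (g v) _ _ (g_ge0 v) E1) as E2. lra. }
  rewrite (RiemannInt_P13 prF prg prC) in HS2. fold G in HS2.
  pose proof (mixture_partial_pgf_le s n Hs) as Hup. fold T in Hup. apply Rabs_def2 in KT.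
  apply Rabs_def1; lra.
Qed.

End PoissonTypeMixture.

Lemma poisson_type_mixture (r : R -> nat -> R) (phi g L : R -> R) :
  (forall v, 0 < v -> forall k, 0 <= r v k) ->
  (forall v, 0 < v -> forall s, 0 <= s <= 1 ->
     infinite_sum (fun k => r v k * s ^ k) (exp (v * phi s))) ->
  phi 1 = 0 -> (forall s, 0 <= s <= 1 -> phi s <= 0) ->
  (forall v, 0 <= g v) ->
  (forall t, 0 <= t -> Rint_0inf (fun v => g v * exp (- (t * v))) (L t)) ->
  exists q : nat -> R, (forall k, Rint_0inf (fun v => g v * r v k) (q k)) /\
    (forall k, 0 <= q k) /\
    forall s, 0 <= s <= 1 -> infinite_sum (fun k => q k * s ^ k) (L (- phi s)).
Proof.
  intros r_ge0 r_pgf phi1 phi_le0 g_ge0 g_laplace.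
  exists (mixture_coef r phi r_ge0 r_pgf phi1 g L g_ge0 g_laplace).
  split; [| split]; intros.
  - apply mixture_coefP.
  - apply mixture_coef_ge0.
  - now apply mixture_pgf.
Qed.

Lemma sgn_cases a : (0 < a /\ sgn a = 1) \/ (a < 0 /\ sgn a = -1) \/ (a = 0 /\ sgn a = 0).
Proof.
  unfold sgn. destruct (Rlt_dec 0 a); [left; auto |].
  destruct (Rlt_dec a 0); [right; left; auto | right; right; split; auto; lra].
Qed.

Lemma ln_le (x y : R) : 0 < x -> x <= y -> ln x <= ln y.
Proof. intros Hx [H|H]; [left; apply ln_increasing; lra | subst; lra]. Qed.

Lemma sgn_mul_rpow_sub_le0 a X Y : 0 <= X <= Y -> (a < 0 -> 0 < X) ->
  sgn a * (rpow X a - rpow Y a) <= 0.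
Proof.
  intros HXY Hneg. unfold rpow.
  destruct (sgn_cases a) as [[Ha ->]|[[Ha ->]|[Ha ->]]]; [| | lra].
  - destruct (Rlt_dec 0 X); destruct (Rlt_dec 0 Y); try lra.
    + unfold Rpower. pose proof (ln_le X Y r (proj2 HXY)).
      assert (a * ln X <= a * ln Y) by (apply Rmult_le_compat_l; lra).
      pose proof (exp_le _ _ H0). lra.
    + unfold Rpower. pose proof (exp_pos (a * ln Y)). lra.
  - specialize (Hneg Ha).
    destruct (Rlt_dec 0 X); destruct (Rlt_dec 0 Y); try lra.
    unfold Rpower. pose proof (ln_le X Y r (proj2 HXY)).
    assert (a * ln Y <= a * ln X) by nra.
    pose proof (exp_le _ _ H0). lra.
Qed.

Lemma rpow_mul a x y : 0 < x -> 0 <= y -> rpow x a * rpow y a = rpow (x * y) a.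
Proof.
  intros Hx Hy. unfold rpow. destruct (Rlt_dec 0 x); [| lra].
  destruct (Rlt_dec 0 y).
  - destruct (Rlt_dec 0 (x * y)); [now apply Rpower_mult_distr |].
    exfalso. apply n. now apply Rmult_lt_0_compat.
  - replace y with 0 by lra. rewrite !Rmult_0_r.
    destruct (Rlt_dec 0 0); [lra | reflexivity].
Qed.

Lemma TDS_gamma_mixture a b c d g (p : R -> nat -> R) :
  TDL_admissible a b c d -> is_gamma_density (b * d) d g ->
  (forall v, 0 < v -> is_TDS a v c (p v)) ->
  exists q : nat -> R,
    (forall k, Rint_0inf (fun v => g v * p v k) (q k)) /\ is_TDL a b c d q.
Proof.
  intros [_ [_ Hac]] [Hg HL] Hp.
  set (phi := fun s => sgn a * (rpow (1 - c) a - rpow (1 - c * s) a)).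
  destruct (poisson_type_mixture p phi g (fun t => rpow (1 + b * d * t) (- (1 / d))))
    as [q [Hq [Hq0 Hqs]]]; auto.
  - intros v Hv k. apply (proj1 (Hp v Hv)).
  - intros v Hv s Hs. pose proof (proj2 (Hp v Hv) s Hs) as K. unfold TDS_pgf in K.
    unfold phi. replace (v * _) with (sgn a * v * (rpow (1 - c) a - rpow (1 - c * s) a)) by ring.
    exact K.
  - unfold phi. rewrite Rmult_1_r, Rminus_diag. ring.
  - intros s Hs. apply sgn_mul_rpow_sub_le0.
    + assert (c * s <= c) by (destruct Hac as [[_ ?]|[_ ?]]; nra).
      destruct Hac as [[_ ?]|[_ ?]]; nra.
    + intros Ha. destruct Hac as [[_ ?]|[? _]]; [| lra].
      assert (c * s <= c) by nra. lra.
  - exists q. split; [exact Hq |]. split; [exact Hq0 |].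
    intros s Hs. unfold TDL_pgf. specialize (Hqs s Hs). unfold phi in Hqs.
    replace (1 + sgn a * b * d * (rpow (1 - c * s) a - rpow (1 - c) a)) with
      (1 + b * d * - (sgn a * (rpow (1 - c) a - rpow (1 - c * s) a))) by ring.
    exact Hqs.
Qed.

Lemma continuity_pt_of_ex_derive (f : R -> R) : (forall x, ex_derive f x) -> forall x, continuity_pt f x.
Proof.
  intros H x. apply continuity_pt_filterlim.
  exact (@ex_derive_continuous R_AbsRing R_NormedModule f x (H x)).
Qed.

Lemma test_fun_const c : test_fun (fun _ => c).
Proof.
  split; [intro x; apply continuity_pt_const; intros y z; auto |].
  exists (Rabs c). intros; lra.
Qed.

Lemma test_fun_plus_scal f h c : test_fun f -> test_fun h -> test_fun (fun x => f x + c * h x).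
Proof.
  intros [Cf [Mf Hf]] [Ch [Mh Hh]]. split.
  - intro x. apply (continuity_pt_plus f (mult_real_fct c h)); auto.
    apply continuity_pt_scal; auto.
  - exists (Mf + Rabs c * Mh). intros x Hx.
    eapply Rle_trans; [apply Rabs_triang |]. rewrite Rabs_mult.
    pose proof (Hf x Hx). pose proof (Hh x Hx).
    assert (Rabs c * Rabs (h x) <= Rabs c * Mh) by (apply Rmult_le_compat_l; auto; apply Rabs_pos).
    lra.
Qed.

Lemma test_fun_scal f c : test_fun f -> test_fun (fun x => c * f x).
Proof.
  intros Tf. replace (fun x => c * f x) with (fun x => 0 + c * f x) by (extensionality x; ring).
  apply test_fun_plus_scal; [apply test_fun_const | exact Tf].
Qed.

Lemma test_fun_sum (f : nat -> R -> R) n : (forall k, test_fun (f k)) ->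
  test_fun (fun x => sum_f_R0 (fun k => f k x) n).
Proof.
  intros Hf. induction n as [|n IH]; [exact (Hf 0%nat) |].
  replace (fun x => sum_f_R0 (fun k => f k x) (S n))
    with (fun x => sum_f_R0 (fun k => f k x) n + 1 * f (S n) x)
    by (extensionality x; simpl; ring).
  now apply test_fun_plus_scal.
Qed.

Section PositiveLaw.

Variable E : (R -> R) -> R.
Hypothesis E_law : is_law_pos E.

Lemma law_plus_scal f h c : test_fun f -> test_fun h ->
  E (fun x => f x + c * h x) = E f + c * E h.
Proof.
  destruct E_law as [_ [E_add [E_scal _]]]. intros Tf Th.
  rewrite (E_add f (fun x => c * h x)), E_scal; auto. now apply test_fun_scal.
Qed.

Lemma law_sum (f : nat -> R -> R) n : (forall k, test_fun (f k)) ->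
  E (fun x => sum_f_R0 (fun k => f k x) n) = sum_f_R0 (fun k => E (f k)) n.
Proof.
  intros Hf. induction n as [|n IH]; [reflexivity |].
  simpl. rewrite <- IH, <- (Rmult_1_l (E (f (S n)))), <- law_plus_scal;
    [| apply test_fun_sum; auto | auto].
  apply (proj1 E_law). intros. ring.
Qed.

(* The continuity axiom of [is_law_pos] applied to the remainders [F - partial sums]. *)
Lemma law_series (f : nat -> R -> R) F : (forall k, test_fun (f k)) -> test_fun F ->
  (forall k x, 0 <= x -> 0 <= f k x) ->
  (forall x, 0 <= x -> infinite_sum (fun k => f k x) (F x)) ->
  infinite_sum (fun k => E (f k)) (E F).
Proof.
  intros Hf HF Hpos Hsum.
  set (rem := fun n x => F x + (-1) * sum_f_R0 (fun k => f k x) n).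
  assert (Hrem : forall n, E (rem n) = E F - sum_f_R0 (fun k => E (f k)) n).
  { intro n. unfold rem. rewrite law_plus_scal, law_sum; auto. ring. apply test_fun_sum; auto. }
  assert (Hcv : Un_cv (fun n => E (rem n)) 0).
  { apply (proj2 (proj2 (proj2 (proj2 (proj2 E_law))))).
    - intro n. apply test_fun_plus_scal; [exact HF | apply test_fun_sum; auto].
    - intros n x Hx. unfold rem. simpl. pose proof (Hpos (S n) x Hx). lra.
    - intros x Hx e He. destruct (Hsum x Hx e He) as [N HN]. exists N. intros n Hn.
      specialize (HN n Hn). unfold Rdist, rem in *. rewrite Rabs_minus_sym in HN.
      replace (F x + -1 * sum_f_R0 (fun k => f k x) n - 0)
        with (F x - sum_f_R0 (fun k => f k x) n) by ring. exact HN. }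
  intros e He. destruct (Hcv e He) as [N HN]. exists N. intros n Hn.
  specialize (HN n Hn). unfold Rdist in *. rewrite Hrem, Rminus_0_r in HN.
  rewrite Rabs_minus_sym. exact HN.
Qed.

End PositiveLaw.

Lemma exp_series y : infinite_sum (fun i => / INR (fact i) * y ^ i) (exp y).
Proof. exact (proj2_sig (exist_exp y)). Qed.

Lemma pois_ge0 k y : 0 <= y -> 0 <= pois k y.
Proof.
  intros Hy. unfold pois. apply Rmult_le_pos; [apply Rmult_le_pos |].
  - left; apply exp_pos.
  - apply pow_le; auto.
  - left; apply Rinv_0_lt_compat, lt_0_INR, lt_O_fact.
Qed.

Lemma pois_le1 k y : 0 <= y -> pois k y <= 1.
Proof.
  intros Hy.
  assert (Hterm : forall i, 0 <= / INR (fact i) * y ^ i).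
  { intro i. apply Rmult_le_pos; [left; apply Rinv_0_lt_compat, lt_0_INR, lt_O_fact |].
    apply pow_le; auto. }
  assert (/ INR (fact k) * y ^ k <= exp y).
  { eapply Rle_trans; [apply (sum_f_R0_ge_term (fun i => / INR (fact i) * y ^ i)), Hterm |].
    apply sum_incr; [apply exp_series | exact Hterm]. }
  unfold pois. replace (exp (- y) * y ^ k / INR (fact k)) with (exp (- y) * (/ INR (fact k) * y ^ k))
    by (unfold Rdiv; ring).
  apply Rle_trans with (exp (- y) * exp y).
  - apply Rmult_le_compat_l; [left; apply exp_pos | assumption].
  - rewrite <- exp_plus, Rplus_opp_l, exp_0. lra.
Qed.

Lemma test_fun_pois k : test_fun (pois k).
Proof.
  split; [apply continuity_pt_of_ex_derive; intro x; unfold pois; auto_derive; auto |].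
  exists 1. intros y Hy. rewrite Rabs_right by (apply Rle_ge, pois_ge0; auto).
  now apply pois_le1.
Qed.

Lemma test_fun_exp t : 0 <= t -> test_fun (fun y => exp (- (t * y))).
Proof.
  intros Ht. split; [apply continuity_pt_of_ex_derive; intro x; auto_derive; auto |].
  exists 1. intros y Hy. rewrite Rabs_right by (left; apply exp_pos).
  rewrite <- exp_0. apply exp_le. nra.
Qed.

Lemma pois_pgf y s : infinite_sum (fun k => s ^ k * pois k y) (exp (- ((1 - s) * y))).
Proof.
  intros e He.
  destruct (CV_mult _ _ _ _ (Un_cv_const (exp (- y))) (exp_series (s * y)) e He) as [N HN].
  exists N. intros n Hn. specialize (HN n Hn).
  replace (exp (- ((1 - s) * y))) with (exp (- y) * exp (s * y))
    by (rewrite <- exp_plus; f_equal; ring).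
  rewrite scal_sum in HN. erewrite sum_eq; [exact HN |].
  intros i _. unfold pois. rewrite Rpow_mult_distr. unfold Rdiv. ring.
Qed.

Lemma TPS_poisson_pgf a w th E : is_TPS a w th E ->
  forall s, 0 <= s <= 1 -> infinite_sum (fun k => E (pois k) * s ^ k)
     (exp (w * (sgn a * (rpow th a - rpow (th + (1 - s)) a)))).
Proof.
  intros [HE HL] s Hs.
  assert (Hlaw : E (fun y => exp (- ((1 - s) * y))) =
                 exp (w * (sgn a * (rpow th a - rpow (th + (1 - s)) a)))).
  { destruct (Rle_lt_or_eq_dec 0 (1 - s)) as [Ht|Ht]; [lra | rewrite HL by auto; f_equal; ring |].
    rewrite <- Ht, Rplus_0_r, Rminus_diag, !Rmult_0_r, exp_0.
    rewrite <- (proj1 (proj2 (proj2 (proj2 (proj2 HE))))).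
    apply (proj1 HE). intros. rewrite Rmult_0_l, Ropp_0. apply exp_0. }
  rewrite <- Hlaw.
  assert (Hscal : forall k, E (fun y => s ^ k * pois k y) = E (pois k) * s ^ k).
  { intro k. rewrite (proj1 (proj2 (proj2 HE))); [ring | apply test_fun_pois]. }
  assert (Hser : infinite_sum (fun k => E (fun y => s ^ k * pois k y)) (E (fun y => exp (- ((1 - s) * y))))).
  { apply law_series; auto.
    - intro k. apply test_fun_scal, test_fun_pois.
    - apply test_fun_exp. lra.
    - intros k x Hx. apply Rmult_le_pos; [apply pow_le; lra | now apply pois_ge0].
    - intros y _. apply pois_pgf. }
  intros e He. destruct (Hser e He) as [N HN].
  exists N. intros n Hn. rewrite <- (sum_eq _ _ n (fun k _ => Hscal k)). exact (HN n Hn).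
Qed.

(* With [th = 1/c - 1] one has [c (th + 1 - s) = 1 - c s], so [c^a] rescales the TPS exponent
   into the TDL one. *)
Lemma TPS_poisson_gamma_mixture a b c d g (E : R -> (R -> R) -> R) :
  TDL_admissible a b c d -> 0 < c <= 1 ->
  is_gamma_density (b * d * rpow c a) d g ->
  (forall w, 0 < w -> is_TPS a w (1 / c - 1) (E w)) ->
  exists q : nat -> R,
    (forall k, Rint_0inf (fun w => g w * E w (pois k)) (q k)) /\ is_TDL a b c d q.
Proof.
  intros [_ [_ Hac]] Hc [Hg HL] HE.
  set (th := 1 / c - 1).
  assert (Hth : 1 <= 1 / c) by (apply Rmult_le_reg_r with c; [lra |]; field_simplify; lra).
  set (phi := fun s => sgn a * (rpow th a - rpow (th + (1 - s)) a)).
  destruct (poisson_type_mixture (fun w k => E w (pois k)) phi g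
      (fun t => rpow (1 + b * d * rpow c a * t) (- (1 / d)))) as [q [Hq [Hq0 Hqs]]]; auto.
  - intros w Hw k. destruct (HE w Hw) as [[_ [_ [_ [E_pos _]]]] _].
    apply E_pos; [apply test_fun_pois | apply pois_ge0].
  - intros w Hw s Hs. exact (TPS_poisson_pgf a w th (E w) (HE w Hw) s Hs).
  - unfold phi. replace (th + (1 - 1)) with th by ring. rewrite Rminus_diag. ring.
  - intros s Hs. apply sgn_mul_rpow_sub_le0; [unfold th; lra |].
    intro Ha. destruct Hac as [[_ ?]|[? _]]; [| lra].
    assert (1 < 1 / c) by (apply Rmult_lt_reg_r with c; [lra |]; field_simplify; lra).
    unfold th. lra.
  - exists q. split; [exact Hq |]. split; [exact Hq0 |].
    intros s Hs. unfold TDL_pgf. specialize (Hqs s Hs). unfold phi in Hqs.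
    assert (E1 : rpow c a * rpow th a = rpow (1 - c) a).
    { rewrite rpow_mul by (unfold th; lra). f_equal. unfold th. field. lra. }
    assert (E2 : rpow c a * rpow (th + (1 - s)) a = rpow (1 - c * s) a).
    { rewrite rpow_mul by (unfold th; lra). f_equal. unfold th. field. lra. }
    replace (1 + sgn a * b * d * (rpow (1 - c * s) a - rpow (1 - c) a)) with
      (1 + b * d * rpow c a * - (sgn a * (rpow th a - rpow (th + (1 - s)) a)))
      by (rewrite <- E1, <- E2; ring).
    exact Hqs.
Qed.

Theorem mainTheorem8 (a b c d : R) (Hadm : TDL_admissible a b c d) :
  (forall (g : R -> R) (p : R -> nat -> R),
     is_gamma_density (b * d) d g ->
     (forall v, 0 < v -> is_TDS a v c (p v)) ->
     exists q : nat -> R,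
       (forall k, Rint_0inf (fun v => g v * p v k) (q k)) /\ is_TDL a b c d q) /\
  (0 < c <= 1 ->
   forall (g : R -> R) (E : R -> (R -> R) -> R),
     is_gamma_density (b * d * rpow c a) d g ->
     (forall w, 0 < w -> is_TPS a w (1 / c - 1) (E w)) ->
     exists q : nat -> R,
       (forall k, Rint_0inf (fun w => g w * E w (pois k)) (q k)) /\ is_TDL a b c d q).
Proof.
  split.
  - intros g p. exact (TDS_gamma_mixture a b c d g p Hadm).
  - intros Hc g E. exact (TPS_poisson_gamma_mixture a b c d g E Hadm Hc).
Qed.
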